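(* The length complexity of $\mathsf{C\text{-}RASP}_+$ (with $\mathsf{C\text{-}RASP}_+$ programs as representations and program size as descriptional complexity) is exponential in the size of the program: there is a polynomial $q$ such that any two $\mathsf{C\text{-}RASP}_+$ programs of size at most $c$ defining different languages are distinguished by a string of length at most $2^{q(c)}$, and exponential length is needed in the worst case.
   Context: $\mathsf{C\text{-}RASP}_+$ formulas over a finite alphabet $\Sigma$: $\phi ::= \sigma \mid \neg\phi \mid \phi_1\wedge\phi_2 \mid \sum_{t\in\mathcal T}\alpha_t t\sim k$, terms $t ::= \#[\phi] \mid c$, with $\sigma\in\Sigma$, $\alpha_t,k,c\in\mathbb{N}$, ${\sim}\in\{\ge,>,=,<,\le\}$. At position $i$ of $w$: $w,i\models\sigma$ iff $w_i=\sigma$; Boolean connectives as usual; $\#[\phi]$ evaluates to $|\{j\in[1,i]: w,j\models\phi\}|$, $c$ to $c$, comparisons are integer comparisons. $w\models\phi$ iff $w,|w|\models\phi$; $L(\phi)=\{w:w\models\phi\}$. Programs are straight-line (DAG) representations with references to earlier lines; size is the number of symbols with constants in binary and references counted as 1. The length complexity is $f(c)=\max\{\min\{|w| : w\in L(E)\setminus L(E')\} : E,E' \text{ programs of size}\le c,\ L(E)\setminus L(E')\neq\emptyset\}$. *)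

From mathcomp Require Import all_boot.
Set Implicit Arguments. Unset Strict Implicit. Unset Printing Implicit Defensive.

Inductive cmpop := CGe | CGt | CEq | CLt | CLe.

Definition cmp_eval (o : cmpop) (x y : nat) : bool :=
  match o with
  | CGe => y <= x | CGt => y < x | CEq => x == y | CLt => x < y | CLe => x <= y
  end.

(* Terms: #[phi] where phi is a reference to an earlier line, or a constant c. *)
Inductive term := TCount of nat | TConst of nat.

(* One line of a straight-line C-RASP_+ program.  References are indices
   (0-based) of earlier lines. *)
Inductive node (Sigma : Type) :=
  | NSym of Sigma
  | NNot of nat
  | NAnd of nat & nat
  | NCmp of seq (nat * term) & cmpop & nat.  (* sum_t alpha_t t  ~  k *)

Definition program (Sigma : Type) := seq (node Sigma).

Definition refs_ok (k : nat) (t : term) : bool :=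
  if t is TCount j then j < k else true.

Definition node_wf Sigma (k : nat) (n : node Sigma) : bool :=
  match n with
  | NSym _ => true
  | NNot i => i < k
  | NAnd i j => (i < k) && (j < k)
  | NCmp ts _ _ => all (fun p => refs_ok k p.2) ts
  end.

Definition wf Sigma (E : program Sigma) : bool :=
  (0 < size E) && all (fun p => node_wf p.1 p.2) (zip (iota 0 (size E)) E).

(* positions are 1-based: w,i |= sigma iff w_i = sigma (false at i = 0) *)
Definition sym_at (Sigma : eqType) (w : seq Sigma) (s : Sigma) (i : nat) : bool :=
  (0 < i) && (nth None (map Some w) i.-1 == Some s).

Definition count_upto (f : nat -> bool) (i : nat) : nat :=
  \sum_(1 <= j < i.+1) f j.

Definition term_val (vals : seq (nat -> bool)) (t : term) (i : nat) : nat :=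
  match t with
  | TCount j => count_upto (nth (fun _ => false) vals j) i
  | TConst c => c
  end.

Definition node_eval (Sigma : eqType) (w : seq Sigma) (vals : seq (nat -> bool))
    (n : node Sigma) : nat -> bool :=
  match n with
  | NSym s => sym_at w s
  | NNot i => fun p => ~~ nth (fun _ => false) vals i p
  | NAnd i j => fun p => nth (fun _ => false) vals i p && nth (fun _ => false) vals j p
  | NCmp ts o k => fun p =>
      cmp_eval o (\sum_(a <- ts) a.1 * term_val vals a.2 p) k
  end.

Definition prog_vals (Sigma : eqType) (w : seq Sigma) (E : program Sigma)
  : seq (nat -> bool) :=
  foldl (fun vals n => rcons vals (node_eval w vals n)) [::] E.

Definition accepts (Sigma : eqType) (E : program Sigma) (w : seq Sigma) : bool :=
  last (fun _ => false) (prog_vals w E) (size w).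

(* length of the binary representation of n (bits 0 = 1) *)
Definition bits (n : nat) : nat := (trunc_log 2 n).+1.

Definition term_size (t : term) : nat :=
  match t with
  | TCount _ => 2          (* the symbol # and one reference *)
  | TConst c => bits c
  end.

Definition node_size Sigma (n : node Sigma) : nat :=
  match n with
  | NSym _ => 1
  | NNot _ => 2            (* ~ and a reference *)
  | NAnd _ _ => 3          (* /\ and two references *)
  | NCmp ts _ k =>
      1 + bits k + \sum_(a <- ts) (1 + bits a.1 + term_size a.2)
      (* relation symbol, constant k, and per summand: a '+' , alpha, term *)
  end.

Definition psize Sigma (E : program Sigma) : nat := \sum_(n <- E) node_size n.

(* polynomial with natural coefficients (constant coefficient first) *)
Definition polyval (q : seq nat) (c : nat) : nat := foldr (fun a acc => a + c * acc) 0 q.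

From mathcomp Require Import all_boot zify.
Set Implicit Arguments. Unset Strict Implicit. Unset Printing Implicit Defensive.

(* Once every comparison constant of a program is below M, the truth value of
   a line depends on the counts #[phi] only through min(#[phi], M).  Call a
   position i flat when no such capped count of E or E' changes from i to
   i + 1: deleting the letter at position i + 1 (if it is not the last one)
   then moves the value of every line at every later position one step left,
   so acceptance by E and E' is preserved.  The sum of all capped counts is nondecreasing,
   bounded by (|E| + |E'|) M, and grows at every non-flat position, so a word
   longer than (|E| + |E'|) M + 1 can always be shortened; M = 2^c gives
   witnesses of length 2^O(c).  Conversely, the program #[s] >= 2^m has size
   m + 7 and every word it accepts has length at least 2^m. *)

Lemma count_upto0 (f : nat -> bool) : count_upto f 0 = 0.
Proof. by rewrite /count_upto big_geq. Qed.

Lemma count_uptoS (f : nat -> bool) i : count_upto f i.+1 = count_upto f i + f i.+1.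
Proof. by rewrite /count_upto big_nat_recr. Qed.

Lemma count_upto_le (f : nat -> bool) i : count_upto f i <= i.
Proof. by elim: i => [|i IH]; rewrite ?count_upto0 // count_uptoS; case: (f _); lia. Qed.

Lemma count_upto_id (f : nat -> bool) i : (forall j, 0 < j <= i -> f j) -> count_upto f i = i.
Proof.
elim: i => [|i IH] f_pos; first exact: count_upto0.
rewrite count_uptoS IH ?f_pos ?leqnn ?addn1 // => j /andP[j_gt0 j_le].
by apply: f_pos; rewrite j_gt0 ltnW.
Qed.

Lemma count_upto_mono (f : nat -> bool) i : count_upto f i <= count_upto f i.+1.
Proof. by rewrite count_uptoS leq_addr. Qed.

Lemma minn_capD M x1 x2 y1 y2 : minn x1 M = minn x2 M -> minn y1 M = minn y2 M ->
  minn (x1 + y1) M = minn (x2 + y2) M.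
Proof. lia. Qed.

Lemma minn_capM M a x y : minn x M = minn y M -> minn (a * x) M = minn (a * y) M.
Proof.
move=> xy; have [-> //|[Mx My]] : x = y \/ M <= x /\ M <= y by lia.
case: a => [|a]; first by rewrite !mul0n.
have : M <= a.+1 * x by nia. have : M <= a.+1 * y by nia. lia.
Qed.

Lemma cmp_eval_minn o S k M : k < M -> cmp_eval o S k = cmp_eval o (minn S M) k.
Proof. by case: o => /=; lia. Qed.

(* After deleting position [n0.+1], position [p] corresponds to position
   [p + (n0 < p)] before the deletion. *)
Lemma minn_count_upto_skip (f g : nat -> bool) n0 M :
  (forall q, f (q + (n0 < q)) = g q) ->
  minn (count_upto f n0.+1) M = minn (count_upto f n0) M ->
  forall p, minn (count_upto f (p + (n0 < p))) M = minn (count_upto g p) M.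
Proof.
move=> fg flat; elim=> [|p IH]; first by rewrite !count_upto0.
have -> : p.+1 + (n0 < p.+1) = (p + (n0 <= p)).+1 by lia.
rewrite !count_uptoS; have -> : f (p + (n0 <= p)).+1 = g p.+1.
  by rewrite -fg; congr f; lia.
apply: minn_capD => //; rewrite -IH.
by case: ltngtP => // <-; rewrite addn0 addn1.
Qed.

Section Semantics.

Variables (Sigma : eqType) (w : seq Sigma).

Definition line_val (E : program Sigma) (j : nat) : nat -> bool :=
  nth (fun _ => false) (prog_vals w E) j.

Lemma prog_vals_rcons E n :
  prog_vals w (rcons E n) = rcons (prog_vals w E) (node_eval w (prog_vals w E) n).
Proof. exact: foldl_rcons. Qed.

Lemma size_prog_vals E : size (prog_vals w E) = size E.
Proof.
by elim/last_ind: E => [|E n IH] //; rewrite prog_vals_rcons !size_rcons IH.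
Qed.

Lemma line_val_default E j : size E <= j -> line_val E j =1 (fun _ => false).
Proof. by move=> E_le p; rewrite /line_val nth_default ?size_prog_vals. Qed.

Lemma accepts_line_val E : accepts E w = line_val E (size E).-1 (size w).
Proof. by rewrite /accepts /line_val -nth_last size_prog_vals. Qed.

Lemma node_eval_rcons vals v k n : k <= size vals ->
  node_wf k n -> node_eval w (rcons vals v) n =1 node_eval w vals n.
Proof.
move=> le_k; have nthE i : i < k ->
    nth (fun _ => false) (rcons vals v) i = nth (fun _ => false) vals i.
  by move=> lt_i; rewrite nth_rcons (leq_trans lt_i le_k).
case: n => [s|i|i j|ts o m] /= n_wf p //.
- by rewrite nthE.
- by case/andP: n_wf => lt_i lt_j; rewrite !nthE.
- congr cmp_eval; rewrite -(all_filterP n_wf) !big_filter.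
  by apply: eq_bigr => -[a [i|c]] //= lt_i; rewrite nthE.
Qed.

Lemma wf_nth E j : wf E -> j < size E -> node_wf j (nth (NNot Sigma 0) E j).
Proof.
case/andP=> _ /(all_nthP (0, NNot Sigma 0)) E_wf lt_j.
have := E_wf j; rewrite size_zip size_iota minnn nth_zip ?size_iota //= nth_iota //.
by move/(_ lt_j).
Qed.

Lemma line_valE E j : wf E -> j < size E ->
  line_val E j =1 node_eval w (prog_vals w E) (nth (NNot Sigma 0) E j).
Proof.
move=> /wf_nth; elim/last_ind: E j => [|E n IH] // j En_wf.
have E_wf i : i < size E -> node_wf i (nth (NNot Sigma 0) E i).
  by move=> lt_i; have := En_wf i; rewrite size_rcons nth_rcons lt_i ltnW // => /(_ isT).
have n_wf : node_wf (size E) n.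
  by have := En_wf (size E); rewrite size_rcons nth_rcons ltnn eqxx ltnSn => /(_ isT).
rewrite size_rcons ltnS leq_eqVlt => /orP[/eqP-> | lt_j] p;
  rewrite /line_val prog_vals_rcons !nth_rcons size_prog_vals ?ltnn ?eqxx ?lt_j.
- by rewrite (node_eval_rcons _ _ n_wf) ?size_prog_vals.
- by rewrite [LHS](IH j E_wf lt_j) (node_eval_rcons _ _ (E_wf j lt_j)) // size_prog_vals ltnW.
Qed.

End Semantics.

Lemma sym_at_delete (Sigma : eqType) (a b : seq Sigma) x s p :
  sym_at (a ++ x :: b) s (p + (size a < p)) = sym_at (a ++ b) s p.
Proof.
rewrite /sym_at !map_cat !nth_cat !size_map; case: p => [|p] //=.
case: (ltnP (size a) p.+1) => [lt_a | le_p] /=; last by rewrite addn0 le_p.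
have -> : p + 1 < size a = false by lia.
by have -> : p + 1 - size a = (p - size a).+1 by lia.
Qed.

Definition consts_lt (Sigma : Type) (M : nat) (E : program Sigma) : bool :=
  all (fun n => if n is NCmp _ _ k then k < M else true) E.

Definition flat_at (Sigma : eqType) (E : program Sigma) M (w : seq Sigma) i : bool :=
  [forall j : 'I_(size E),
     minn (count_upto (line_val w E j) i.+1) M == minn (count_upto (line_val w E j) i) M].

Section Deletion.

Variables (Sigma : eqType) (E : program Sigma) (M : nat) (a b : seq Sigma) (x : Sigma).
Hypotheses (E_wf : wf E) (E_consts : consts_lt M E).
Hypothesis E_flat : flat_at E M (a ++ x :: b) (size a).

Lemma line_val_delete j p :
  line_val (a ++ x :: b) E j (p + (size a < p)) = line_val (a ++ b) E j p.
Proof.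
elim/ltn_ind: j p => j IH p.
have [lt_j | le_j] := ltnP j (size E); last by rewrite !line_val_default.
have count_skip r : r < j -> forall q,
    minn (count_upto (line_val (a ++ x :: b) E r) (q + (size a < q))) M =
    minn (count_upto (line_val (a ++ b) E r) q) M.
  move=> lt_r; apply: minn_count_upto_skip; first exact: IH.
  by apply/eqP; have /forallP := E_flat; move/(_ (Ordinal (ltn_trans lt_r lt_j))).
rewrite !line_valE //; have := wf_nth E_wf lt_j.
have := all_nthP (NNot Sigma 0) E_consts j lt_j.
case: (nth _ E j) => [s|i|i k|ts o m] /= m_lt n_wf.
- exact: sym_at_delete.
- by rewrite -!/(line_val _ _ i) IH.
- by case/andP: n_wf => lt_i lt_k; rewrite -!/(line_val _ _ _) !IH.
- rewrite (cmp_eval_minn _ _ m_lt) [RHS](cmp_eval_minn _ _ m_lt); congr cmp_eval.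
  rewrite -(all_filterP n_wf) !big_filter.
  apply: (big_ind2 (fun u v => minn u M = minn v M)) => //; first exact: minn_capD.
  move=> -[c [r|k]] //= lt_r; apply: minn_capM; exact: count_skip.
Qed.

End Deletion.

Lemma accepts_delete (Sigma : eqType) (E : program Sigma) M (a b : seq Sigma) x :
  wf E -> consts_lt M E -> flat_at E M (a ++ x :: b) (size a) -> 0 < size b ->
  accepts E (a ++ x :: b) = accepts E (a ++ b).
Proof.
move=> E_wf E_consts E_flat b_gt0; rewrite !accepts_line_val.
rewrite -(line_val_delete E_wf E_consts E_flat) !size_cat /=.
by have -> : size a + size b + (size a < size a + size b) = size a + (size b).+1 by lia.
Qed.

Lemma leqif_chain (f : nat -> nat) (C : pred nat) m :
  (forall i, f i <= f i.+1 ?= iff C i) -> f m < m -> exists2 i, i < m & C i.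
Proof.
move=> f_leqif; elim: m => [|m IH] // lt_fm.
case Cm: (C m); first by exists m.
have lt_f : f m < f m.+1 by rewrite (ltn_leqif (f_leqif m)) Cm.
by case: IH => [|i lt_i Ci]; [apply: leq_trans lt_f _ | exists i; first exact: ltnW].
Qed.

Definition potential (Sigma : eqType) (E : program Sigma) M (w : seq Sigma) i : nat :=
  \sum_(j < size E) minn (count_upto (line_val w E j) i) M.

Lemma potential_leqif (Sigma : eqType) (E : program Sigma) M w i :
  potential E M w i <= potential E M w i.+1 ?= iff flat_at E M w i.
Proof.
apply: leqif_sum => j _; rewrite -[eqn _ _]/(_ == _) eq_sym; apply: leqif_eq.
by have := count_upto_mono (line_val w E j) i; lia.
Qed.

Lemma potential_le (Sigma : eqType) (E : program Sigma) M w i :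
  potential E M w i <= size E * M.
Proof.
rewrite -[size E in X in _ <= X]card_ord -sum_nat_const.
by apply: leq_sum => j _; apply: geq_minr.
Qed.

Lemma split_at (T : Type) (w : seq T) i :
  i < size w -> exists a x b, w = a ++ x :: b /\ size a = i.
Proof.
move=> lt_i; case def_b: (drop i w) => [|x b].
  by move: (size_drop i w); rewrite def_b /=; lia.
by exists (take i w), x, b; rewrite -def_b cat_take_drop size_takel // ltnW.
Qed.

Section ShortWitness.

Variables (Sigma : eqType) (E E' : program Sigma) (M : nat).
Hypotheses (E_wf : wf E) (E'_wf : wf E').
Hypotheses (E_consts : consts_lt M E) (E'_consts : consts_lt M E').

Lemma exists_common_flat_at (w : seq Sigma) : (size E + size E') * M + 1 < size w ->
  exists2 i, i.+1 < size w & flat_at E M w i && flat_at E' M w i.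
Proof.
move=> long_w; have [|i lt_i flat_i] := leqif_chain (m := (size w).-1)
  (fun i => leqif_add (potential_leqif E M w i) (potential_leqif E' M w i)).
  rewrite mulnDl in long_w.
  by have := potential_le E M w (size w).-1; have := potential_le E' M w (size w).-1; lia.
by exists i => //; lia.
Qed.

Lemma short_witness (w : seq Sigma) : accepts E w && ~~ accepts E' w ->
  exists2 v : seq Sigma, accepts E v && ~~ accepts E' v & size v <= (size E + size E') * M + 1.
Proof.
have [n] := ubnP (size w); elim: n w => // n IH w /ltnSE le_w acc_w.
have [short_w | long_w] := leqP (size w) ((size E + size E') * M + 1); first by exists w.
have [i lt_i /andP[flat_E flat_E']] := exists_common_flat_at long_w.
have [a [x [b [def_w size_a]]]] := split_at (ltnW lt_i); subst w i.
have b_gt0 : 0 < size b by move: lt_i; rewrite size_cat /=; lia.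
rewrite (accepts_delete E_wf E_consts flat_E b_gt0)
  (accepts_delete E'_wf E'_consts flat_E' b_gt0) in acc_w.
by apply: IH acc_w; move: le_w; rewrite !size_cat /=; lia.
Qed.

End ShortWitness.

Lemma size_le_psize (Sigma : Type) (E : program Sigma) : size E <= psize E.
Proof.
rewrite /psize; elim: E => [|n E IH]; rewrite ?big_nil ?big_cons //=.
by rewrite -add1n leq_add // lt0n; case: n.
Qed.

Lemma consts_lt_psize (Sigma : Type) (E : program Sigma) c :
  psize E <= c -> consts_lt (2 ^ c) E.
Proof.
rewrite /psize; elim: E => [|n E IH] //=; rewrite big_cons => le_c.
rewrite IH ?andbT; last exact: leq_trans (leq_addl _ _) le_c.
case: n le_c => //= ts o k le_c.
apply: leq_trans (trunc_log_ltn k (isT : 1 < 2)) _; rewrite leq_exp2l //.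
by move: le_c; rewrite /bits; lia.
Qed.

Lemma bits_exp2 m : bits (2 ^ m) = m.+1.
Proof. by rewrite /bits trunc_expnK. Qed.

Lemma witness_size_bound c s s' : s <= c -> s' <= c ->
  (s + s') * 2 ^ c + 1 <= 2 ^ polyval [:: 2; 2] c.
Proof.
move=> le_s le_s'; rewrite /polyval /= muln0 addn0 expnD mulnC expnM.
have := ltn_expl c (isT : 1 < 2); move: (2 ^ c) => x lt_c; nia.
Qed.

Section LowerBound.

Variables (Sigma : eqType) (s : Sigma).

Definition at_least (n : nat) : program Sigma :=
  [:: NSym s; NCmp Sigma [:: (1, TCount 0)] CGe n].

Definition never : program Sigma := [:: NSym s; NCmp Sigma [::] CLt 0].

Lemma accepts_at_least n w : accepts (at_least n) w = (n <= count_upto (sym_at w s) (size w)).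
Proof. by rewrite /accepts /prog_vals /= big_cons big_nil mul1n addn0. Qed.

Lemma accepts_never w : accepts never w = false.
Proof. by rewrite /accepts /prog_vals /= big_nil. Qed.

Lemma psize_at_least n : psize (at_least n) = bits n + 6.
Proof.
rewrite /psize !big_cons big_nil /= big_cons big_nil /=.
by have -> : bits 1 = 1 by []; lia.
Qed.

Lemma psize_never : psize never = 3.
Proof. by rewrite /psize !big_cons big_nil /= big_nil /bits trunc_log0. Qed.

Lemma count_upto_sym_nseq n : count_upto (sym_at (nseq n s) s) n = n.
Proof.
apply: count_upto_id => i /andP[i_gt0 le_i].
by rewrite /sym_at i_gt0 map_nseq nth_nseq (_ : i.-1 < n) ?eqxx //; lia.
Qed.

End LowerBound.

Theorem theorem4p7 (Sigma : finType) (hSigma : 0 < #|Sigma|) :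
  (* upper bound: f(c) <= 2^(q(c)) for a polynomial q *)
  (exists q : seq nat,
     forall (c : nat) (E E' : program Sigma),
       wf E -> wf E' -> psize E <= c -> psize E' <= c ->
       (exists w : seq Sigma, accepts E w && ~~ accepts E' w) ->
       exists w : seq Sigma,
         [&& accepts E w, ~~ accepts E' w & size w <= 2 ^ polyval q c])
  /\
  (* lower bound: f(c) >= 2^(c/d) for all large c *)
  (exists d : nat, 0 < d /\
     forall c : nat, d <= c ->
       exists E E' : program Sigma,
         [/\ wf E && wf E', psize E <= c, psize E' <= c,
             (exists w : seq Sigma, accepts E w && ~~ accepts E' w) &
             forall w : seq Sigma, accepts E w && ~~ accepts E' w ->
               2 ^ (c %/ d) <= size w]).
Proof.
split.
  exists [:: 2; 2] => c E E' E_wf E'_wf le_E le_E' [w acc_w].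
  have [v /andP[acc_v rej_v] le_v] := short_witness E_wf E'_wf
    (consts_lt_psize le_E) (consts_lt_psize le_E') acc_w.
  exists v; rewrite acc_v rej_v (leq_trans le_v) // witness_size_bound //.
  - exact: leq_trans (size_le_psize E) le_E.
  - exact: leq_trans (size_le_psize E') le_E'.
exists 8; split=> // c le_8c; have [s _] := card_gt0P hSigma.
exists (at_least s (2 ^ (c %/ 8))), (never s).
split=> //.
- by rewrite psize_at_least bits_exp2; lia.
- by rewrite psize_never; lia.
- exists (nseq (2 ^ (c %/ 8)) s).
  by rewrite accepts_at_least accepts_never size_nseq count_upto_sym_nseq leqnn.
- move=> w; rewrite accepts_at_least accepts_never andbT => /leq_trans; apply.
  exact: count_upto_le.
Qed.
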